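(* Let $\Lambda$ be a row-finite, source-free, strongly connected $k$-graph and let $x,y\in\Lambda^\infty$ be such that $\sigma^m(x)=\sigma^n(y)$ for some $m,n\in\mathbb N^k$. Then the representations $\pi_x$ on $\mathcal H_x$ and $\pi_y$ on $\mathcal H_y$ (described in the context) are unitarily equivalent.
   Context: $k$-graph: countable small category $\Lambda$ with degree functor $d:\Lambda\to\mathbb N^k$ with unique factorization; $r,s$ range/source, $\Lambda v=\{\lambda:s(\lambda)=v\}$; row-finite, source-free and strongly connected ($v\Lambda w\ne\emptyset$ for all vertices) as usual. Infinite paths $x:\Omega_k\to\Lambda$ (degree-preserving functors from the $k$-graph $\Omega_k$ of pairs $(p,q)$, $p\le q$ in $\mathbb N^k$), shift $\sigma^m(x)(p,q)=x(p+m,q+m)$. Construction: for $x\in\Lambda^\infty$ write $\mathbf 1=(1,\dots,1)$, $x_i=x((i-1)\mathbf 1,i\mathbf 1)$, $v_i=r(x_i)$, $F_i=\Lambda v_i$; $\mathcal H_x=\varinjlim(\ell^2(F_i),\rho_i)$ with $\rho_i(\xi^i_\lambda)=\xi^{i+1}_{\lambda x_i}$, i.e. for $i\le j$ the basis vectors $\xi^i_\lambda$ and $\xi^j_\mu$ are identified iff $\mu=\lambda x_i\cdots x_{j-1}$, with classes $[\xi^i_\lambda]$. $\pi_x$ is the representation of $C^*(\Lambda)$ on $\mathcal H_x$ given by $\pi_x(t_\lambda)[\xi^i_\mu]=[\xi^i_{\lambda\mu}]$ if $s(\lambda)=r(\mu)$ and $0$ otherwise, where $\{t_\lambda\}$ are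 the Cuntz–Krieger generators of $C^*(\Lambda)$. *)

From Stdlib Require Import Reals List ClassicalEpsilon.
From Stdlib Require Fin.

Set Implicit Arguments.

Definition Nk (k : nat) := Fin.t k -> nat.
Definition nk_add {k} (m n : Nk k) : Nk k := fun i => (m i + n i)%nat.
Definition nk_sub {k} (m n : Nk k) : Nk k := fun i => (m i - n i)%nat.
Definition nk_le {k} (m n : Nk k) : Prop := forall i, (m i <= n i)%nat.
Definition nk_zero {k} : Nk k := fun _ => 0%nat.
Definition nk_diag {k} (c : nat) : Nk k := fun _ => c.

(* ---------- k-graphs ----------
   A countable small category (objects Obj, morphisms Mor, composition
   comp l m = "l m" defined when src l = rng m) with a degree functor
   deg : Mor -> N^k having the unique factorisation property. *)
Record kgraph (k : nat) := KGraph {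
  Obj : Type;
  Mor : Type;
  rng : Mor -> Obj;
  src : Mor -> Obj;
  idm : Obj -> Mor;
  comp : Mor -> Mor -> Mor;
  deg : Mor -> Nk k;
  rng_idm : forall v, rng (idm v) = v;
  src_idm : forall v, src (idm v) = v;
  rng_comp : forall l m, src l = rng m -> rng (comp l m) = rng l;
  src_comp : forall l m, src l = rng m -> src (comp l m) = src m;
  comp_idl : forall l, comp (idm (rng l)) l = l;
  comp_idr : forall l, comp l (idm (src l)) = l;
  comp_assoc : forall l m n, src l = rng m -> src m = rng n ->
      comp (comp l m) n = comp l (comp m n);
  deg_idm : forall v, deg (idm v) = nk_zero;
  deg_comp : forall l m, src l = rng m -> deg (comp l m) = nk_add (deg l) (deg m);
  unique_factorisation : forall l (m n : Nk k), deg l = nk_add m n ->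
      exists mu nu, src mu = rng nu /\ comp mu nu = l /\ deg mu = m /\ deg nu = n /\
        (forall mu' nu', src mu' = rng nu' -> comp mu' nu' = l ->
           deg mu' = m -> deg nu' = n -> mu' = mu /\ nu' = nu);
  mor_countable : exists f : Mor -> nat, forall a b, f a = f b -> a = b
}.

Arguments Obj {k} _.
Arguments Mor {k} _.
Arguments rng {k L} _ : rename.
Arguments src {k L} _ : rename.
Arguments idm {k L} _ : rename.
Arguments comp {k L} _ _ : rename.
Arguments deg {k L} _ : rename.

Section KG.
Context {k : nat} (L : kgraph k).

Definition row_finite : Prop :=
  forall (v : Obj L) (n : Nk k), exists l : list (Mor L),
    forall lam : Mor L, rng lam = v -> deg lam = n -> In lam l.

Definition source_free : Prop :=
  forall (v : Obj L) (n : Nk k), exists lam : Mor L, rng lam = v /\ deg lam = n.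

Definition strongly_connected : Prop :=
  forall v w : Obj L, exists lam : Mor L, rng lam = v /\ src lam = w.

(* Infinite paths: degree-preserving functors Omega_k -> Lambda, where
   Omega_k has morphisms (p,q), p <= q, (p,q)(q,r) = (p,r), d(p,q) = q - p.
   Only the values on pairs p <= q are meaningful. *)
Definition ipath := Nk k -> Nk k -> Mor L.

Record is_inf_path (x : ipath) : Prop := {
  ip_deg : forall p q, nk_le p q -> deg (x p q) = nk_sub q p;
  ip_comp : forall p q r, nk_le p q -> nk_le q r ->
      src (x p q) = rng (x q r) /\ comp (x p q) (x q r) = x p r;
  ip_idm : forall p, x p p = idm (rng (x p p))
}.

Definition shift_eq (x y : ipath) (m n : Nk k) : Prop :=
  forall p q, nk_le p q -> x (nk_add p m) (nk_add q m) = y (nk_add p n) (nk_add q n).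

(* ---------- the direct-limit basis of H_x (levels indexed from 0) ----------
   x_i = x(i1,(i+1)1), v_i = r(x_i), F_i = Lambda v_i.
   A basis element xi^i_lam is a pair (i, lam) with s(lam) = v_i. *)
Definition seg (x : ipath) (i j : nat) : Mor L := x (nk_diag i) (nk_diag j).
Definition vtx (x : ipath) (i : nat) : Obj L := rng (seg x i (S i)).

Definition Bx (x : ipath) := { p : nat * Mor L | src (snd p) = vtx x (fst p) }.

Definition req (x : ipath) (a b : nat * Mor L) : Prop :=
  exists l, (fst a <= l)%nat /\ (fst b <= l)%nat /\
    comp (snd a) (seg x (fst a) l) = comp (snd b) (seg x (fst b) l).

Definition Bx_eq (x : ipath) (a b : Bx x) : Prop := req x (proj1_sig a) (proj1_sig b).

End KG.

Definition C := (R * R)%type.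
Definition C0 : C := (0%R, 0%R).
Definition Cadd (z w : C) : C := (fst z + fst w, snd z + snd w)%R.
Definition Cmul (z w : C) : C :=
  (fst z * fst w - snd z * snd w, fst z * snd w + snd z * fst w)%R.
Definition Cnorm2 (z : C) : R := (fst z * fst z + snd z * snd z)%R.

Section L2.
Context {D : Type} (E : D -> D -> Prop).

Definition respects (f : D -> C) : Prop := forall a b, E a b -> f a = f b.

Fixpoint classes_distinct (l : list D) : Prop :=
  match l with
  | nil => True
  | a :: t => (forall b, In b t -> ~ E a b) /\ classes_distinct t
  end.

Definition psum (f : D -> C) (l : list D) : R :=
  fold_right (fun a acc => (Cnorm2 (f a) + acc)%R) 0%R l.

Definition sqnorm_is (f : D -> C) (r : R) : Prop :=
  is_lub (fun t => exists l, classes_distinct l /\ t = psum f l) r.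

(* f is (a representative of) an element of l^2(D/E) *)
Definition in_l2 (f : D -> C) : Prop := respects f /\ exists r, sqnorm_is f r.

End L2.

Section Rep.
Context {k : nat} (L : kgraph k) (x : ipath L).

(* [xi^i_mu] is in the range of t_lam, namely equal to [xi^j_{lam nu}] *)
Definition in_range (lam : Mor L) (a b : Bx x) : Prop :=
  src lam = rng (snd (proj1_sig b)) /\
  req x (proj1_sig a) (fst (proj1_sig b), comp lam (snd (proj1_sig b))).

(* pi_x(t_lam) acting on coordinate functions f = sum_b f(b) [xi_b]:
   (pi_x(t_lam) f)(a) = f(b) if [a] = [lam b], and 0 otherwise. *)
Definition pi_t (lam : Mor L) (f : Bx x -> C) (a : Bx x) : C :=
  match excluded_middle_informative (exists b, in_range lam a b) with
  | left H => f (proj1_sig (constructive_indefinite_description _ H))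
  | right _ => C0
  end.

End Rep.

Definition unitarily_equivalent {k} (L : kgraph k) (x y : ipath L) : Prop :=
  exists U : (Bx x -> C) -> (Bx y -> C),
    (forall f, in_l2 (@Bx_eq k L x) f -> in_l2 (@Bx_eq k L y) (U f)) /\
    (forall (c : C) f g, in_l2 (@Bx_eq k L x) f -> in_l2 (@Bx_eq k L x) g ->
       forall d, U (fun b => Cadd (Cmul c (f b)) (g b)) d = Cadd (Cmul c (U f d)) (U g d)) /\
    (forall f r, in_l2 (@Bx_eq k L x) f -> sqnorm_is (@Bx_eq k L x) f r -> sqnorm_is (@Bx_eq k L y) (U f) r) /\
    (forall g, in_l2 (@Bx_eq k L y) g -> exists f, in_l2 (@Bx_eq k L x) f /\ forall d, U f d = g d) /\
    (forall lam f, in_l2 (@Bx_eq k L x) f ->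
       forall d, U (pi_t lam f) d = pi_t lam (U f) d).

(* Since sigma^m(x) = sigma^n(y), the paths agree after reindexing:
     y(p, q) = x(p - n + m, q - n + m)   for n <= p <= q.
   Choose B with m, n <= B(1,...,1).  A basis vector xi^i_lam of H_y is first pushed along y
   to level i + B, where y has become a piece of x, and then continued along x; this gives
     (i, lam) |-> (i + 2B, lam y(i1, (i+B)1) x((i+B)1 - n + m, (i+2B)1)).
   It respects the direct-limit identifications, the same construction with x and y exchanged
   inverts it up to those identifications, and it commutes with left multiplication by every
   lam, which by unique factorisation is injective on classes.  So it induces a bijection of
   the orthonormal bases of H_y and H_x, and precomposition of coordinate functions with it is
   a unitary intertwining pi_x and pi_y. *)

From Stdlib Require Import Reals List ClassicalEpsilon.
From Stdlib Require Import Lia FunctionalExtensionality.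

Lemma nk_ext {k} (p q : Nk k) : (forall i, p i = q i) -> p = q.
Proof. exact (functional_extensionality p q). Qed.

Lemma nk_bounded {k} (p : Nk k) : exists N, nk_le p (nk_diag N).
Proof.
  induction k as [|k IH].
  - exists 0. intro i. inversion i.
  - destruct (IH (fun i => p (Fin.FS i))) as [N HN].
    exists (Nat.max N (p Fin.F1)). intro i. unfold nk_diag.
    apply (Fin.caseS' i (fun i => p i <= Nat.max N (p Fin.F1))); [lia|].
    intro j. specialize (HN j). unfold nk_diag in HN. lia.
Qed.

Definition nk_shift {k} (m n q : Nk k) : Nk k := nk_add (nk_sub q n) m.

Ltac nk_lia :=
  let i := fresh "i" in
  try apply nk_ext;
  unfold nk_le, nk_shift, nk_add, nk_sub, nk_diag in *; intro i;
  repeat match goal with H : forall _ : Fin.t _, _ |- _ => specialize (H i) end;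
  simpl in *; lia.

Lemma comp_inj_l {k} {L : kgraph k} (lam mu nu : Mor L) :
  src lam = rng mu -> src lam = rng nu -> comp lam mu = comp lam nu -> mu = nu.
Proof.
  intros Hmu Hnu Heq.
  assert (Hdeg : deg mu = deg nu).
  { apply nk_ext; intro i.
    pose proof (f_equal (fun l => deg l i) Heq) as Hi; cbn in Hi.
    rewrite (deg_comp _ _ _ Hmu), (deg_comp _ _ _ Hnu) in Hi. unfold nk_add in Hi. lia. }
  destruct (unique_factorisation _ _ (deg_comp _ _ _ Hmu)) as [? [? [_ [_ [_ [_ Huniq]]]]]].
  destruct (Huniq lam mu Hmu eq_refl eq_refl eq_refl) as [_ ->].
  destruct (Huniq lam nu Hnu (eq_sym Heq) eq_refl (eq_sym Hdeg)) as [_ ->].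
  reflexivity.
Qed.

Definition extend {k} {L : kgraph k} (z : ipath L) (a : nat * Mor L) (q : Nk k) : Mor L :=
  comp (snd a) (z (nk_diag (fst a)) q).

Definition in_basis {k} {L : kgraph k} (z : ipath L) (a : nat * Mor L) : Prop :=
  src (snd a) = vtx z (fst a).

Definition lmul {k} {L : kgraph k} (lam : Mor L) (a : nat * Mor L) : nat * Mor L :=
  (fst a, comp lam (snd a)).

Section InfinitePath.
Context {k : nat} {L : kgraph k} {z : ipath L} (Hz : is_inf_path z).

Lemma rng_path p q : nk_le p q -> rng (z p q) = rng (z p p).
Proof.
  intro Hpq. assert (Hpp : nk_le p p) by nk_lia.
  destruct (ip_comp Hz Hpp Hpq) as [Hsrc Hcomp].
  rewrite <- Hcomp at 1. apply rng_comp, Hsrc.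
Qed.

Lemma src_path p q : nk_le p q -> src (z p q) = rng (z q q).
Proof. intro Hpq. apply (ip_comp Hz Hpq); nk_lia. Qed.

Lemma vtx_path i : vtx z i = rng (z (nk_diag i) (nk_diag i)).
Proof. apply rng_path. nk_lia. Qed.

Lemma src_basis a q : in_basis z a -> nk_le (nk_diag (fst a)) q ->
  src (snd a) = rng (z (nk_diag (fst a)) q).
Proof. intros Ha Hq. rewrite Ha, vtx_path. symmetry. apply rng_path, Hq. Qed.

Lemma src_extend a q : in_basis z a -> nk_le (nk_diag (fst a)) q ->
  src (extend z a q) = rng (z q q).
Proof.
  intros Ha Hq. unfold extend.
  rewrite src_comp by (apply src_basis; auto). apply src_path, Hq.
Qed.

Lemma rng_extend a q : in_basis z a -> nk_le (nk_diag (fst a)) q ->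
  rng (extend z a q) = rng (snd a).
Proof. intros Ha Hq. apply rng_comp, src_basis; auto. Qed.

Lemma extend_trans a q q' : in_basis z a -> nk_le (nk_diag (fst a)) q -> nk_le q q' ->
  extend z a q' = comp (extend z a q) (z q q').
Proof.
  intros Ha Hq Hqq'. destruct (ip_comp Hz Hq Hqq') as [Hsrc Hcomp].
  unfold extend. rewrite comp_assoc, Hcomp; auto. apply src_basis; auto.
Qed.

Lemma extend_eq_trans a b q q' : in_basis z a -> in_basis z b ->
  nk_le (nk_diag (fst a)) q -> nk_le (nk_diag (fst b)) q -> nk_le q q' ->
  extend z a q = extend z b q -> extend z a q' = extend z b q'.
Proof. intros. rewrite (extend_trans a q), (extend_trans b q); auto; congruence. Qed.

Lemma extend_lmul a lam q : in_basis z a -> src lam = rng (snd a) -> nk_le (nk_diag (fst a)) q ->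
  extend z (lmul lam a) q = comp lam (extend z a q).
Proof.
  intros Ha Hlam Hq. unfold extend, lmul; cbn.
  apply comp_assoc; auto. apply src_basis; auto.
Qed.

Lemma in_basis_lmul a lam : in_basis z a -> src lam = rng (snd a) -> in_basis z (lmul lam a).
Proof. intros Ha Hlam. unfold in_basis, lmul; cbn. rewrite src_comp; auto. Qed.

Lemma req_iff_extend a b : in_basis z a -> in_basis z b ->
  req z a b <-> exists q, nk_le (nk_diag (fst a)) q /\ nk_le (nk_diag (fst b)) q /\
                          extend z a q = extend z b q.
Proof.
  intros Ha Hb. split.
  - intros [l [Hal [Hbl Heq]]]. exists (nk_diag l). split; [nk_lia | split; [nk_lia | exact Heq]].
  - intros [q [Haq [Hbq Heq]]]. destruct (nk_bounded q) as [N HN].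
    exists (N + fst a + fst b). split; [lia | split; [lia |]].
    apply (extend_eq_trans a b q); auto. nk_lia.
Qed.

Lemma req_sym a b : req z a b -> req z b a.
Proof. intros [l [Hal [Hbl Heq]]]. exists l. auto. Qed.

Lemma req_trans a b c : in_basis z a -> in_basis z b -> in_basis z c ->
  req z a b -> req z b c -> req z a c.
Proof.
  intros Ha Hb Hc Hab Hbc.
  apply req_iff_extend in Hab as [q1 [Haq1 [Hbq1 Hab]]]; auto.
  apply req_iff_extend in Hbc as [q2 [Hbq2 [Hcq2 Hbc]]]; auto.
  apply req_iff_extend; auto.
  set (q := fun i => Nat.max (q1 i) (q2 i)).
  exists q. split; [unfold q; nk_lia | split; [unfold q; nk_lia |]].
  rewrite (extend_eq_trans a b q1 q), (extend_eq_trans b c q2 q); auto; unfold q; nk_lia.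
Qed.

Lemma req_lmul_cancel a b lam : in_basis z a -> in_basis z b ->
  src lam = rng (snd a) -> src lam = rng (snd b) ->
  req z (lmul lam a) (lmul lam b) -> req z a b.
Proof.
  intros Ha Hb Hlama Hlamb Hreq.
  apply req_iff_extend in Hreq as [q [Haq [Hbq Heq]]]; try apply in_basis_lmul; auto.
  apply req_iff_extend; auto. exists q. split; [exact Haq | split; [exact Hbq |]].
  rewrite !extend_lmul in Heq; auto.
  apply (comp_inj_l lam); auto; rewrite rng_extend; auto.
Qed.

Lemma Bx_eq_sym (a b : Bx z) : Bx_eq a b -> Bx_eq b a.
Proof. apply req_sym. Qed.

Lemma Bx_eq_trans (a b c : Bx z) : Bx_eq a b -> Bx_eq b c -> Bx_eq a c.
Proof. destruct a, b, c. apply req_trans; auto. Qed.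

Lemma in_range_req lam (a a' b : Bx z) : Bx_eq a a' -> in_range lam a' b -> in_range lam a b.
Proof.
  destruct a as [a Ha], a' as [a' Ha'], b as [b Hb]. intros Haa' [Hlam Hreq].
  split; auto. apply (req_trans a a'); auto. apply in_basis_lmul; auto.
Qed.

Lemma in_range_unique lam (a b b' : Bx z) : in_range lam a b -> in_range lam a b' -> Bx_eq b b'.
Proof.
  destruct a as [a Ha], b as [b Hb], b' as [b' Hb']. intros [Hlamb Hab] [Hlamb' Hab'].
  apply (req_lmul_cancel b b' lam); auto.
  apply (req_trans _ a); try apply in_basis_lmul; auto. apply req_sym, Hab.
Qed.

Lemma pi_t_in_range lam f (a b : Bx z) :
  respects (Bx_eq (x:=z)) f -> in_range lam a b -> pi_t lam f a = f b.
Proof.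
  intros Hf Hab. unfold pi_t.
  destruct excluded_middle_informative as [Hsome | Hnone]; [| exfalso; eauto].
  destruct constructive_indefinite_description as [b' Hab']; cbn.
  apply Hf, (in_range_unique lam a); auto.
Qed.

Lemma pi_t_not_in_range lam f (a : Bx z) : ~ (exists b, in_range lam a b) -> pi_t lam f a = C0.
Proof. intro Hnone. unfold pi_t. destruct excluded_middle_informative; tauto. Qed.

End InfinitePath.

Definition transport {k} {L : kgraph k} (x y : ipath L) (m n : Nk k) (B : nat)
  (b : nat * Mor L) : nat * Mor L :=
  (fst b + 2 * B, comp (extend y b (nk_diag (fst b + B)))
                       (x (nk_shift m n (nk_diag (fst b + B))) (nk_diag (fst b + 2 * B)))).

Lemma shift_eq_sym {k} {L : kgraph k} {x y : ipath L} {m n : Nk k} :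
  shift_eq x y m n -> shift_eq y x n m.
Proof. intros Hmn p q Hpq. symmetry; auto. Qed.

Section Transport.
Context {k : nat} {L : kgraph k} {x y : ipath L} (Hx : is_inf_path x) (Hy : is_inf_path y)
  {m n : Nk k} (Hmn : shift_eq x y m n) {B : nat}
  (HBm : nk_le m (nk_diag B)) (HBn : nk_le n (nk_diag B)).

Local Notation tr := (transport x y m n B).
Local Notation sh := (nk_shift m n).

Lemma shift_path p q : nk_le n p -> nk_le p q -> x (sh p) (sh q) = y p q.
Proof. intros Hnp Hpq. unfold nk_shift. rewrite Hmn by nk_lia. f_equal; nk_lia. Qed.

Lemma transport_composable b : in_basis y b ->
  src (extend y b (nk_diag (fst b + B))) =
  rng (x (sh (nk_diag (fst b + B))) (nk_diag (fst b + 2 * B))).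
Proof.
  intro Hb. rewrite (src_extend Hy), (rng_path Hx) by (auto; nk_lia).
  rewrite shift_path by nk_lia. reflexivity.
Qed.

Lemma in_basis_transport b : in_basis y b -> in_basis x (tr b).
Proof.
  intro Hb. unfold in_basis, transport; cbn [fst snd].
  rewrite src_comp by (apply transport_composable; auto).
  rewrite (vtx_path Hx). apply (src_path Hx). nk_lia.
Qed.

Lemma rng_transport b : in_basis y b -> rng (snd (tr b)) = rng (snd b).
Proof.
  intro Hb. unfold transport; cbn [snd].
  rewrite rng_comp by (apply transport_composable; auto).
  apply (rng_extend Hy); auto. nk_lia.
Qed.

Lemma extend_transport b q : in_basis y b -> nk_le (nk_diag (fst b + 3 * B)) q ->
  extend x (tr b) (sh q) = extend y b q.
Proof.
  intros Hb Hq.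
  set (Q := nk_diag (k:=k) (fst b + B)).
  set (D := nk_diag (k:=k) (fst b + 2 * B)).
  assert (HQD : nk_le (sh Q) D) by (unfold Q, D; nk_lia).
  assert (HDq : nk_le D (sh q)) by (unfold D; nk_lia).
  destruct (ip_comp Hx HQD HDq) as [Hsrc Hcomp].
  unfold extend at 1, transport; cbn [fst snd]; fold Q D.
  rewrite comp_assoc, Hcomp by (auto; apply transport_composable; auto).
  rewrite shift_path by (unfold Q; nk_lia).
  symmetry. apply (extend_trans Hy); auto; unfold Q; nk_lia.
Qed.

Lemma req_transport a b : in_basis y a -> in_basis y b -> req y a b -> req x (tr a) (tr b).
Proof.
  intros Ha Hb Hab.
  apply (req_iff_extend Hy) in Hab as [q [Haq [Hbq Heq]]]; auto.
  apply (req_iff_extend Hx); try apply in_basis_transport; auto.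
  set (q' := fun i => Nat.max (q i) (fst a + fst b + 3 * B)).
  exists (sh q'). split; [|split].
  - unfold q'; nk_lia.
  - unfold q'; nk_lia.
  - rewrite !extend_transport by (auto; unfold q'; nk_lia).
    apply (extend_eq_trans Hy a b q); auto. unfold q'; nk_lia.
Qed.

Lemma transport_lmul b lam : in_basis y b -> src lam = rng (snd b) ->
  req x (tr (lmul lam b)) (lmul lam (tr b)).
Proof.
  intros Hb Hlam.
  assert (Htb : in_basis x (tr b)) by (apply in_basis_transport; auto).
  assert (Hlam' : src lam = rng (snd (tr b))) by (rewrite rng_transport; auto).
  apply (req_iff_extend Hx);
    [apply in_basis_transport, in_basis_lmul; auto | apply in_basis_lmul; auto |].
  set (q := nk_diag (k:=k) (fst b + 3 * B)).
  exists (sh q). split; [|split]; [unfold q; nk_lia .. |].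
  rewrite (extend_lmul Hx), !extend_transport; auto; try (unfold q; nk_lia).
  - apply (extend_lmul Hy); auto. unfold q; nk_lia.
  - apply in_basis_lmul; auto.
Qed.

Definition transport_basis (d : Bx y) : Bx x :=
  exist _ (tr (proj1_sig d)) (in_basis_transport _ (proj2_sig d)).

Lemma Bx_eq_transport (a b : Bx y) : Bx_eq a b -> Bx_eq (transport_basis a) (transport_basis b).
Proof. destruct a, b. apply req_transport; auto. Qed.

Lemma in_range_transport lam (d b : Bx y) :
  in_range lam d b -> in_range lam (transport_basis d) (transport_basis b).
Proof.
  destruct d as [d Hd], b as [b Hb]. intros [Hlam Hdb]; cbn [proj1_sig] in *.
  assert (Hlb : in_basis y (lmul lam b)) by (apply in_basis_lmul; auto).
  assert (Hlam' : src lam = rng (snd (tr b))) by (rewrite rng_transport; auto).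
  split; cbn [proj1_sig]; auto.
  apply (req_trans Hx _ (tr (lmul lam b))).
  - apply in_basis_transport; auto.
  - apply in_basis_transport; auto.
  - apply in_basis_lmul; auto. apply in_basis_transport; auto.
  - apply req_transport; auto.
  - apply transport_lmul; auto.
Qed.

End Transport.

Section Bijection.
Context {k : nat} {L : kgraph k} {x y : ipath L} (Hx : is_inf_path x) (Hy : is_inf_path y)
  {m n : Nk k} (Hmn : shift_eq x y m n) {B : nat}
  (HBm : nk_le m (nk_diag B)) (HBn : nk_le n (nk_diag B)).

Local Notation psi := (transport_basis Hx Hy Hmn HBm HBn).
Local Notation phi := (transport_basis Hy Hx (shift_eq_sym Hmn) HBn HBm).

Lemma transport_roundtrip b : in_basis y b -> req y (transport y x n m B (transport x y m n B b)) b.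
Proof.
  intro Hb.
  pose proof (shift_eq_sym Hmn) as Hnm.
  assert (Hxb : in_basis x (transport x y m n B b))
    by (apply (in_basis_transport Hx Hy Hmn HBm HBn); auto).
  apply (req_iff_extend Hy); auto; [apply (in_basis_transport Hy Hx Hnm HBn HBm); auto |].
  set (q := nk_diag (k:=k) (fst b + 6 * B)).
  exists q. split; [|split]; [unfold q; nk_lia .. |].
  assert (Hq : nk_shift n m (nk_shift m n q) = q) by (unfold q; nk_lia).
  rewrite <- Hq at 1.
  rewrite (extend_transport Hy Hx Hnm HBn HBm) by (auto; unfold q; nk_lia).
  apply (extend_transport Hx Hy Hmn HBm HBn); auto. unfold q; nk_lia.
Qed.

Lemma Bx_eq_roundtrip (d : Bx y) : Bx_eq (phi (psi d)) d.
Proof. destruct d. apply transport_roundtrip; auto. Qed.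

Lemma pi_t_transport lam f (d : Bx y) : respects (Bx_eq (x:=x)) f ->
  pi_t lam f (psi d) = pi_t lam (fun e => f (psi e)) d.
Proof.
  intro Hf.
  destruct (excluded_middle_informative (exists b, in_range lam d b)) as [[b Hb] | Hnone].
  - rewrite (pi_t_in_range Hx lam f _ _ Hf (in_range_transport Hx Hy Hmn HBm HBn lam d b Hb)).
    symmetry. apply (pi_t_in_range Hy lam (fun e => f (psi e)) d b); auto.
    intros a a' Haa'. apply Hf, Bx_eq_transport, Haa'.
  - rewrite !pi_t_not_in_range; auto.
    intros [b Hb]. apply Hnone. exists (phi b).
    apply (in_range_req Hy lam _ (phi (psi d))).
    + apply Bx_eq_sym, Bx_eq_roundtrip.
    + apply in_range_transport, Hb.
Qed.

End Bijection.

Lemma reflects_of_retraction {D1 D2 : Type} {E1 : D1 -> D1 -> Prop} {E2 : D2 -> D2 -> Prop}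
  (p : D2 -> D1) (q : D1 -> D2) :
  (forall a b, E2 a b -> E2 b a) -> (forall a b c, E2 a b -> E2 b c -> E2 a c) ->
  (forall a b, E1 a b -> E2 (q a) (q b)) -> (forall a, E2 (q (p a)) a) ->
  forall a b, E1 (p a) (p b) -> E2 a b.
Proof.
  intros Hsym Htrans Hq Hqp a b Hab.
  apply (Htrans _ (q (p a))); [apply Hsym, Hqp |].
  apply (Htrans _ (q (p b))); [apply Hq, Hab | apply Hqp].
Qed.

Lemma classes_distinct_map {X Y : Type} {EX : X -> X -> Prop} {EY : Y -> Y -> Prop} (g : X -> Y) :
  (forall a b, EY (g a) (g b) -> EX a b) ->
  forall l, classes_distinct EX l -> classes_distinct EY (map g l).
Proof.
  intros Hg l. induction l as [|a l IH]; cbn; auto.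
  intros [Ha Hl]. split; auto.
  intros b Hb Hab. apply in_map_iff in Hb as [c [<- Hc]]. apply (Ha c Hc), Hg, Hab.
Qed.

Lemma psum_map {X Y : Type} (f : Y -> C) (g : X -> Y) l :
  psum f (map g l) = psum (fun a => f (g a)) l.
Proof. unfold psum. induction l as [|a l IH]; cbn; congruence. Qed.

Lemma is_lub_ext (P Q : R -> Prop) r : (forall t, P t <-> Q t) -> is_lub Q r -> is_lub P r.
Proof.
  intros HPQ [Hub Hleast]. split.
  - intros t Ht. apply Hub, HPQ, Ht.
  - intros b Hb. apply Hleast. intros t Ht. apply Hb, HPQ, Ht.
Qed.

Section Precomposition.
Context {D1 D2 : Type} {E1 : D1 -> D1 -> Prop} {E2 : D2 -> D2 -> Prop}
  (p : D2 -> D1) (q : D1 -> D2)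
  (p_respects : forall a b, E2 a b -> E1 (p a) (p b))
  (p_reflects : forall a b, E1 (p a) (p b) -> E2 a b)
  (q_reflects : forall a b, E2 (q a) (q b) -> E1 a b)
  (pq_id : forall a, E1 (p (q a)) a).

Lemma sqnorm_is_comp f r : respects E1 f -> sqnorm_is E1 f r -> sqnorm_is E2 (fun d => f (p d)) r.
Proof.
  intro Hf. apply is_lub_ext. intro t. split.
  - intros [l [Hl ->]]. exists (map p l). split.
    + apply (classes_distinct_map p p_reflects), Hl.
    + symmetry. apply psum_map.
  - intros [l [Hl ->]]. exists (map q l). split.
    + apply (classes_distinct_map q q_reflects), Hl.
    + rewrite psum_map. f_equal. apply functional_extensionality. intro a.
      symmetry. apply Hf, pq_id.
Qed.

Lemma in_l2_comp f : in_l2 E1 f -> in_l2 E2 (fun d => f (p d)).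
Proof.
  intros [Hf [r Hr]]. split.
  - intros a b Hab. apply Hf, p_respects, Hab.
  - exists r. apply sqnorm_is_comp; auto.
Qed.

End Precomposition.

Theorem mainTheorem4 (k : nat) (L : kgraph k)
  (Hrf : row_finite L) (Hsf : source_free L) (Hsc : strongly_connected L)
  (x y : ipath L) (Hx : is_inf_path x) (Hy : is_inf_path y)
  (m n : Nk k) (Hmn : shift_eq x y m n) :
  unitarily_equivalent x y.
Proof.
  destruct (nk_bounded (nk_add m n)) as [B HB].
  assert (HBm : nk_le m (nk_diag B)) by nk_lia.
  assert (HBn : nk_le n (nk_diag B)) by nk_lia.
  set (psi := transport_basis Hx Hy Hmn HBm HBn).
  set (phi := transport_basis Hy Hx (shift_eq_sym Hmn) HBn HBm).
  pose proof (Bx_eq_transport Hx Hy Hmn HBm HBn) as psi_respects.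
  pose proof (Bx_eq_transport Hy Hx (shift_eq_sym Hmn) HBn HBm) as phi_respects.
  pose proof (Bx_eq_roundtrip Hx Hy Hmn HBm HBn) as phi_psi.
  (* [shift_eq_sym (shift_eq_sym Hmn)] is not [Hmn], but [transport_basis] ignores its proofs. *)
  assert (psi_phi : forall d, Bx_eq (psi (phi d)) d)
    by exact (Bx_eq_roundtrip Hy Hx (shift_eq_sym Hmn) HBn HBm).
  pose proof (reflects_of_retraction psi phi (Bx_eq_sym (z:=y)) (Bx_eq_trans Hy)
                phi_respects phi_psi) as psi_reflects.
  pose proof (reflects_of_retraction phi psi (Bx_eq_sym (z:=x)) (Bx_eq_trans Hx)
                psi_respects psi_phi) as phi_reflects.
  exists (fun f d => f (psi d)). split; [|split; [|split; [|split]]].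
  - exact (in_l2_comp psi phi psi_respects psi_reflects phi_reflects psi_phi).
  - reflexivity.
  - intros f r [Hf _]. exact (sqnorm_is_comp psi phi psi_reflects phi_reflects psi_phi f r Hf).
  - intros g Hg. exists (fun e => g (phi e)). split.
    + exact (in_l2_comp phi psi phi_respects phi_reflects psi_reflects phi_psi g Hg).
    + intro d. apply (proj1 Hg), phi_psi.
  - intros lam f [Hf _] d. apply pi_t_transport, Hf.
Qed.
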